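(* Consider the problem $\min_{x\in\mathbb{R}^n}\max_{y\in\Delta}F(x)^Ty$ and assume strict complementarity holds. If $(x,y)$ is a stationary solution, then the vectors $(\nabla f_i(x)^T,1)^T\in\mathbb{R}^{n+1}$, $i\in\mathcal{T}(x)$, are linearly independent (equivalently, the matrix with rows $(\nabla f_i(x)^T,1)$, $i\in\mathcal{T}(x)$, has full row rank).
   Context: $F(x)=(f_1(x),\dots,f_m(x))^T$ is a smooth map $\mathbb{R}^n\to\mathbb{R}^m$ and $\Delta$ the probability simplex in $\mathbb{R}^m$. $(x^*,y^* )$ is a stationary solution if there exist $\mu\in\mathbb{R}$, $\nu\in\mathbb{R}^m$ with $\sum_iy_i^*\nabla f_i(x^* )=0$, $\sum_iy_i^*=1$, $y_i^*\ge0$, $\mu-\nu_i=f_i(x^* )$, $\nu_i\ge0$, $\nu_iy_i^*=0$ for all $i$ (KKT system). Strict complementarity: for every $(x^*,y^*,\mu,\nu)$ satisfying the KKT system, $\nu_i>0$ for all $i$ with $y_i^*=0$. $\mathcal{T}(x)=\{i\in[m]:f_i(x)=\max_jf_j(x)\}$. *)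

From HB Require Import structures.
From mathcomp Require Import all_boot all_order all_algebra.
From mathcomp Require Import all_classical all_reals all_analysis.
Set Implicit Arguments. Unset Strict Implicit. Unset Printing Implicit Defensive.
Import Order.TTheory GRing.Theory Num.Theory.
Import numFieldNormedType.Exports.
Local Open Scope ring_scope.

Section Defs.
Variables (R : realType) (n m : nat).
Implicit Types (f : 'I_m -> 'rV[R]_n -> R) (x : 'rV[R]_n) (y nu : 'I_m -> R) (mu : R).

Definition grad f (i : 'I_m) x : 'rV[R]_n :=
  \row_(j < n) ('D_(delta_mx 0 j) (f i) x).

(* KKT system of min_x max_{y in simplex} F(x)^T y *)
Definition KKT f x y mu nu : Prop :=
  \sum_(i < m) y i *: grad f i x = 0 /\
  \sum_(i < m) y i = 1 /\
  (forall i, 0 <= y i) /\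
  (forall i, mu - nu i = f i x) /\
  (forall i, 0 <= nu i) /\
  (forall i, nu i * y i = 0).

Definition stationary f x y : Prop := exists mu nu, KKT f x y mu nu.

Definition strict_complementarity f : Prop :=
  forall x y mu nu, KKT f x y mu nu -> forall i, y i = 0 -> 0 < nu i.

Definition active_set f x : {set 'I_m} :=
  [set i | [forall j, f j x <= f i x]].

Definition ext_grad f (i : 'I_m) x : 'rV[R]_(n + 1) :=
  row_mx (grad f i x) (1 : 'rV[R]_1).

End Defs.

(* If the active gradients, each extended by a 1, admitted a nontrivial linear
   relation c, then c would sum to 0 and vanish off the active set, so moving
   the multiplier y along c keeps the KKT system satisfied with the same mu and
   nu (on the active set nu = 0).  Moving until a first coordinate of y hits 0
   (a ratio test on a negative entry of c) produces a KKT point with y_i = 0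
   but nu_i = 0 at an active index i, contradicting strict complementarity. *)

From HB Require Import structures.
From mathcomp Require Import all_boot all_order all_algebra.
From mathcomp Require Import all_classical all_reals all_analysis.
From mathcomp Require Import lra.
Import Order.TTheory GRing.Theory Num.Theory.
Import numFieldNormedType.Exports.
Set Implicit Arguments. Unset Strict Implicit. Unset Printing Implicit Defensive.
Local Open Scope ring_scope.

Lemma free_map_uniq (K : fieldType) (vT : vectType K) (I : finType)
    (v : I -> vT) (s : seq I) :
    uniq s ->
    (forall c : I -> K, (forall i, i \notin s -> c i = 0) ->
       \sum_i c i *: v i = 0 -> forall i, c i = 0) ->
  free [seq v i | i <- s].
Proof.
move=> s_uniq v_indep.
suff: free (map_tuple v (in_tuple s)) by [].
apply/freeP => k sum_k0 j.
pose g := tnth (in_tuple s).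
have g_inj : injective g by apply/tuple_uniqP.
pose c i := \sum_(j | i == g j) k j.
have c_supp i : i \notin s -> c i = 0.
  move=> s'i; apply: big_pred0 => j'.
  by apply: contraNF s'i => /eqP ->; apply: mem_tnth.
have sum_c0 : \sum_i c i *: v i = 0.
  apply: etrans _ sum_k0; under eq_bigr do rewrite scaler_suml.
  rewrite (exchange_big_dep xpredT) //=; apply: eq_bigr => j' _.
  rewrite big_pred1_eq (nth_map (g j')) //; congr (_ *: v _); exact: tnth_nth.
have := v_indep c c_supp sum_c0 (g j).
by rewrite /c (big_pred1 j) // => j'; apply/eqP/eqP => [/g_inj | ->].
Qed.

Lemma sum_scale_row_mx (R : pzRingType) (I : finType) (n1 n2 : nat)
    (c : I -> R) (u : I -> 'rV[R]_n1) (w : I -> 'rV[R]_n2) :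
  \sum_i c i *: row_mx (u i) (w i) =
    row_mx (\sum_i c i *: u i) (\sum_i c i *: w i).
Proof.
elim/big_rec3: _ => [|i a b e _ ->]; first by rewrite row_mx0.
by rewrite scale_row_mx add_row_mx.
Qed.

Lemma sum_eq0_has_neg (R : realDomainType) (I : finType) (c : I -> R) (i : I) :
  \sum_j c j = 0 -> c i != 0 -> exists j, c j < 0.
Proof.
move=> sum_c0 ci_neq0; apply/existsP; apply: contraNT ci_neq0.
rewrite negb_exists => /forallP c_ge0.
have c_ge0' j : 0 <= c j by rewrite leNgt c_ge0.
by apply/eqP; apply: (psumr_eq0P (fun j _ => c_ge0' j) sum_c0).
Qed.

(* The ratio test of the simplex method: t = min { y_i / -c_i | c_i < 0 }. *)
Lemma ratio_test (R : realFieldType) (I : finType) (y c : I -> R) (i1 : I) :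
    (forall i, 0 <= y i) -> c i1 < 0 ->
  exists i0 t, [/\ c i0 < 0, y i0 + t * c i0 = 0
                 & forall i, 0 <= y i + t * c i].
Proof.
move=> y_ge0 ci1_lt0.
have [i0 ci0_lt0 t_min] :=
  arg_minP (fun i => y i / - c i) (P := fun i => c i < 0) ci1_lt0.
exists i0, (y i0 / - c i0); split=> // [|i].
  by rewrite invrN mulrN mulNr -mulrA mulVf ?mulr1 ?subrr ?(ltr0_neq0 ci0_lt0).
have [ci_lt0|ci_ge0] := ltrP (c i) 0; last first.
  by rewrite addr_ge0 // mulr_ge0 // divr_ge0 // oppr_ge0 ltW.
have := t_min i ci_lt0; rewrite ler_pdivlMr ?oppr_gt0 // => t_le; lra.
Qed.

Section KKTPoint.
Variables (R : realType) (n m : nat) (f : 'I_m -> 'rV[R]_n -> R).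
Variables (x : 'rV[R]_n) (y nu : 'I_m -> R) (mu : R).
Hypothesis kkt : KKT f x y mu nu.

Lemma KKT_nu_active i : i \in active_set f x -> nu i = 0.
Proof.
have [_ [sum_y1 [_ [mu_nu [nu_ge0 compl]]]]] := kkt.
rewrite inE => /forallP fi_max.
have [j yj_neq0] : exists j, y j != 0.
  apply/existsP; apply: contraT; rewrite negb_exists => /forallP y0.
  have sum_y0 : \sum_i y i = 0 by apply: big1 => i' _; apply/eqP/negPn/y0.
  by move: sum_y1; rewrite sum_y0 => /esym/eqP; rewrite oner_eq0.
have nuj0 : nu j = 0 by apply: (mulIf yj_neq0); rewrite mul0r compl.
have := fi_max j; rewrite -mu_nu -mu_nu nuj0 => nu_le.
by apply/eqP; rewrite eq_le nu_ge0 andbT; lra.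
Qed.

Lemma KKT_shift (c : 'I_m -> R) (t : R) :
    (forall i, i \notin active_set f x -> c i = 0) ->
    \sum_i c i *: grad f i x = 0 -> \sum_i c i = 0 ->
    (forall i, 0 <= y i + t * c i) ->
  KKT f x (fun i => y i + t * c i) mu nu.
Proof.
move=> c_supp sum_cgrad0 sum_c0 y'_ge0.
have [sum_ygrad0 [sum_y1 [_ [mu_nu [nu_ge0 compl]]]]] := kkt.
split; [|split; [|split; [|split; [|split]]]] => //.
- under eq_bigr do rewrite scalerDl -scalerA.
  by rewrite big_split /= sum_ygrad0 -scaler_sumr sum_cgrad0 scaler0 addr0.
- by rewrite big_split /= sum_y1 -mulr_sumr sum_c0 mulr0 addr0.
- move=> i; rewrite mulrDr compl add0r.
  have [i_act|i_nact] := boolP (i \in active_set f x).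
    by rewrite KKT_nu_active // mul0r.
  by rewrite c_supp // !mulr0.
Qed.

Lemma strict_complementarity_active_indep (c : 'I_m -> R) :
    strict_complementarity f ->
    (forall i, i \notin active_set f x -> c i = 0) ->
    \sum_i c i *: grad f i x = 0 -> \sum_i c i = 0 ->
  forall i, c i = 0.
Proof.
move=> sc c_supp sum_cgrad0 sum_c0 i; apply/eqP; apply: contraT => ci_neq0.
have [i1 ci1_lt0] := sum_eq0_has_neg sum_c0 ci_neq0.
have [_ [_ [y_ge0 _]]] := kkt.
have [i0 [t [ci0_lt0 y'i0_0 y'_ge0]]] := ratio_test y_ge0 ci1_lt0.
have i0_act : i0 \in active_set f x.
  by apply: contraT => /c_supp ci0_0; move: ci0_lt0; rewrite ci0_0 ltxx.
have := sc _ _ _ _ (KKT_shift c_supp sum_cgrad0 sum_c0 y'_ge0) i0 y'i0_0.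
by rewrite KKT_nu_active // ltxx.
Qed.

End KKTPoint.

Theorem lemma20 (R : realType) (n m : nat) (f : 'I_m -> 'rV[R]_n -> R)
  (hdiff : forall i x, differentiable (f i) x)
  (hsc : strict_complementarity f)
  (x : 'rV[R]_n) (y : 'I_m -> R)
  (hst : stationary f x y) :
  free [seq ext_grad f i x | i <- enum (active_set f x)].
Proof.
have [mu [nu kkt]] := hst.
apply: free_map_uniq; first exact: enum_uniq.
move=> c c_supp; rewrite sum_scale_row_mx -scaler_suml => /eqP.
rewrite row_mx_eq0 scaler_eq0 oner_eq0 orbF => /andP[/eqP sum_cgrad0 /eqP sum_c0].
apply: (strict_complementarity_active_indep kkt hsc _ sum_cgrad0 sum_c0).
by move=> i; rewrite -mem_enum; apply: c_supp.
Qed.
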